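(* For a fixed typed DAG task $G=(V,E,\gamma,c)$, the quantity \[ B_1(M)=len(\hat G)+\sum_{s\in S}\frac{vol_s(G)}{M_s} \] is non-increasing in each $M_s$ (with the other $M_{s'}$ fixed), i.e., increasing the number of cores of any type never increases this bound.
   Context: A typed DAG task is $G=(V,E,\gamma,c)$ where $(V,E)$ is a finite directed acyclic graph with a unique source and a unique sink, $S$ is a finite set of core types, $\gamma:V\to S$ gives the type of each vertex, and $c:V\to\mathbb{R}_{\ge0}$ gives the WCET of each vertex. The platform has $M_s\ge1$ cores of type $s$, $M=(M_s)_{s\in S}$. $vol_s(G)=\sum_{u\in V,\gamma(u)=s}c(u)$. The scaled graph $\hat G$ has the same vertices, edges and types as $G$ with weights $\hat c(v)=c(v)(1-1/M_{\gamma(v)})$, and $len(\hat G)$ is its longest path length with respect to $\hat c$ (which depends on $M$). *)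

From HB Require Import structures.
From mathcomp Require Import all_boot all_order all_algebra.
Set Implicit Arguments. Unset Strict Implicit. Unset Printing Implicit Defensive.
Import Order.TTheory GRing.Theory Num.Theory.
Local Open Scope ring_scope.

Definition acyclic (V : finType) (E : rel V) : Prop :=
  forall (x : V) (p : seq V), path E x p -> x \notin p.

Definition is_source (V : finType) (E : rel V) (v : V) : bool :=
  [forall u, ~~ E u v].
Definition is_sink (V : finType) (E : rel V) (v : V) : bool :=
  [forall u, ~~ E v u].

Definition typed_dag (V : finType) (E : rel V) : Prop :=
  [/\ acyclic E,
      #|[set v | is_source E v]| = 1%N &
      #|[set v | is_sink E v]| = 1%N].

Definition vol (R : realFieldType) (V S : finType) (gamma : V -> S)
  (c : V -> R) (s : S) : R :=
  \sum_(u : V | gamma u == s) c u.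

Definition chat (R : realFieldType) (V S : finType) (gamma : V -> S)
  (c : V -> R) (M : S -> nat) (v : V) : R :=
  c v * (1 - ((M (gamma v))%:R)^-1).

Definition path_weight (R : realFieldType) (V : finType) (w : V -> R)
  (p : seq V) : R := \sum_(v <- p) w v.

(* Longest path length w.r.t. vertex weights w: maximum of path_weight over
   all nonempty simple E-paths (tuples of size n+1 < #|V|+1; every simple
   path has at most #|V| vertices, and in a DAG every path is simple).
   The default 0 is harmless since weights are nonnegative. *)
Definition longest_path (R : realFieldType) (V : finType) (E : rel V)
  (w : V -> R) : R :=
  \big[Num.max/0]_(n < #|V|)
    \big[Num.max/0]_(t : n.+1.-tuple V | path E (thead t) (behead t) && uniq t)
      path_weight w t.

Definition len_hat (R : realFieldType) (V S : finType) (E : rel V)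
  (gamma : V -> S) (c : V -> R) (M : S -> nat) : R :=
  longest_path E (chat gamma c M).

Definition B1 (R : realFieldType) (V S : finType) (E : rel V)
  (gamma : V -> S) (c : V -> R) (M : S -> nat) : R :=
  len_hat E gamma c M + \sum_(s : S) vol gamma c s / (M s)%:R.

(* Raising M_s to M'_s, with d := 1/M_s - 1/M'_s >= 0, increases the scaled
   weight of every vertex v of type s by d * c(v) and leaves the other weights
   unchanged.  A simple path visits each vertex at most once, so its scaled
   weight grows by at most d * vol_s(G), and hence so does len(\hat G); the
   volume term vol_s(G) / M_s, on the other hand, drops by exactly
   d * vol_s(G). *)

From HB Require Import structures.
From mathcomp Require Import all_boot all_order all_algebra.
From mathcomp Require Import ring lra.
Set Implicit Arguments. Unset Strict Implicit. Unset Printing Implicit Defensive.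
Import Order.TTheory GRing.Theory Num.Theory.
Local Open Scope ring_scope.

Section LongestPath.
Variables (R : realFieldType) (V : finType) (E : rel V).

Lemma longest_path_ge0 (w : V -> R) : 0 <= longest_path E w.
Proof. exact: bigmax_ge_id. Qed.

Lemma longest_path_leD (w w' : V -> R) (K : R) : 0 <= K ->
  (forall p, uniq p -> path_weight w' p <= path_weight w p + K) ->
  longest_path E w' <= longest_path E w + K.
Proof.
move=> K_ge0 le_w'w; have lpK_ge0 := addr_ge0 (longest_path_ge0 w) K_ge0.
apply: bigmax_le => // n _; apply: bigmax_le => // t /andP[Et uniq_t].
apply: le_trans (le_w'w _ uniq_t) _; rewrite lerD2r.
apply: (bigmax_sup n) => //; by apply: (bigmax_sup t); rewrite ?Et ?uniq_t.
Qed.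

Lemma path_weight_uniq_le_sum (w : V -> R) (p : seq V) :
  (forall v, 0 <= w v) -> uniq p -> path_weight w p <= \sum_v w v.
Proof.
move=> w_ge0 uniq_p; rewrite /path_weight big_uniq // big_mkcond /=.
by apply: ler_sum => v _; case: ifP.
Qed.

End LongestPath.

Section ChangeOneCoreCount.
Variables (R : realFieldType) (V S : finType) (gamma : V -> S) (c : V -> R).
Variables (M M' : S -> nat) (s : S).
Hypothesis M'_eq_M : forall t, t != s -> M' t = M t.

Let d : R := (M s)%:R^-1 - (M' s)%:R^-1.

Lemma chat_change (v : V) :
  chat gamma c M' v = chat gamma c M v + d * (if gamma v == s then c v else 0).
Proof.
rewrite /chat /d; case: eqP => [->|/eqP ne_s]; first by ring.
by rewrite M'_eq_M // mulr0 addr0.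
Qed.

Lemma sum_vol_div_change :
  \sum_t vol gamma c t / (M' t)%:R
  = \sum_t vol gamma c t / (M t)%:R - d * vol gamma c s.
Proof.
rewrite (bigD1 s) // [in RHS](bigD1 s) //=.
under eq_bigr => t ne_s do rewrite M'_eq_M //.
rewrite /d; ring.
Qed.

Lemma len_hat_change (E : rel V) : (0 < M s)%N -> (M s <= M' s)%N ->
  (forall v, 0 <= c v) ->
  len_hat E gamma c M' <= len_hat E gamma c M + d * vol gamma c s.
Proof.
move=> Ms_gt0 le_MM' c_ge0.
have d_ge0 : 0 <= d.
  by rewrite subr_ge0 lef_pV2 ?posrE ?ltr0n ?ler_nat // (leq_trans Ms_gt0).
apply: longest_path_leD => [|p uniq_p]; first by rewrite mulr_ge0 ?sumr_ge0.
rewrite /path_weight (eq_bigr _ (fun v _ => chat_change v)) big_split /=.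
rewrite lerD2l -mulr_sumr ler_wpM2l // /vol [leRHS]big_mkcond /=.
by apply: path_weight_uniq_le_sum => // v; case: ifP.
Qed.

End ChangeOneCoreCount.

Theorem corollary2 (R : realFieldType) (V S : finType) (E : rel V)
  (gamma : V -> S) (c : V -> R)
  (hG : typed_dag E) (hc : forall v, 0 <= c v)
  (M M' : S -> nat) (s : S)
  (hM : forall t, (1 <= M t)%N)
  (hle : (M s <= M' s)%N)
  (hother : forall t, t != s -> M' t = M t) :
  B1 E gamma c M' <= B1 E gamma c M.
Proof.
rewrite /B1 (sum_vol_div_change gamma c hother).
have := len_hat_change gamma hother E (hM s) hle hc.
by lra.
Qed.
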